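(* Let $\tilde\sigma,\hat\sigma\in[0,1)$ and $(\tau,\theta)\in\mathcal R_{\tilde\sigma}$. Define $\varphi,\widehat\varphi,\widetilde\varphi,\overline\varphi:\mathbb{R}\to\mathbb{R}$ by $$\varphi(\sigma)=(1-\tau)(\sigma-1)+(1-\tau-\tilde\sigma)(\tau+\theta),\qquad \widehat\varphi(\sigma)=(1-\tau)[(1+\theta)\sigma-1+\tau]-\tilde\sigma(\tau+\theta),$$ $$\widetilde\varphi(\sigma)=\sigma-(1-\tau-\theta)^2-\tilde\sigma(\tau+\theta),\qquad \overline\varphi(\sigma)=[(1+\tau)\widehat\varphi(\sigma)-2\tau\varphi(\sigma)](1+\tau)\widetilde\varphi(\sigma)-(1-\theta)^2\varphi(\sigma)^2.$$ Then there exists $\sigma\in[\hat\sigma,1)$ such that $\varphi(\sigma)\ge0$, $\widehat\varphi(\sigma)\ge0$, $\widetilde\varphi(\sigma)>0$ and $\overline\varphi(\sigma)\ge0$.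
   Context: $\mathcal R_{\tilde\sigma}:=\{(\tau,\theta):\tau\in(-1,1-\tilde\sigma),\ \tau+\theta>0,\ (1-\tau^2)(2-\tau-\theta-\tilde\sigma)-(1-\theta)^2(1-\tau-\tilde\sigma)>0\}$. *)

From Stdlib Require Import Reals Lra.
Open Scope R_scope.

Definition region_R (st tau theta : R) : Prop :=
  -1 < tau /\ tau < 1 - st /\ tau + theta > 0 /\
  (1 - tau ^ 2) * (2 - tau - theta - st) - (1 - theta) ^ 2 * (1 - tau - st) > 0.

Definition phi (st tau theta s : R) : R :=
  (1 - tau) * (s - 1) + (1 - tau - st) * (tau + theta).

Definition phihat (st tau theta s : R) : R :=
  (1 - tau) * ((1 + theta) * s - 1 + tau) - st * (tau + theta).

Definition phitilde (st tau theta s : R) : R :=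
  s - (1 - tau - theta) ^ 2 - st * (tau + theta).

Definition phibar (st tau theta s : R) : R :=
  ((1 + tau) * phihat st tau theta s - 2 * tau * phi st tau theta s)
    * (1 + tau) * phitilde st tau theta s
  - (1 - theta) ^ 2 * (phi st tau theta s) ^ 2.

(* At sigma = 1 the four functions factor through tau + theta > 0,
   1 - tau - st > 0 and the defining inequality of the region, so all four
   are positive at 1.  Being polynomial, they stay positive on a left
   neighbourhood of 1, which meets [sh, 1). *)

From Stdlib Require Import Reals Lra Psatz.
From Coquelicot Require Import Coquelicot.
Open Scope R_scope.

Lemma locally_pos_of_continuity_pt (f : R -> R) (x : R) :
  continuity_pt f x -> 0 < f x -> locally x (fun y => 0 < f y).
Proof.
  intros f_cont fx_pos.
  apply continuity_pt_filterlim in f_cont.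
  exact (f_cont _ (open_gt 0 (f x) fx_pos)).
Qed.

Lemma at_left_exists_ge (a x : R) (P : R -> Prop) :
  a < x -> at_left x P -> exists y, a <= y < x /\ P y.
Proof.
  intros a_lt_x P_left.
  assert (a_left : at_left x (fun y => a < y))
    by exact (filter_le_within _ _ (open_gt a x a_lt_x)).
  assert (below : at_left x (fun y => y < x))
    by exact (filter_forall _ (fun y (y_lt_x : y < x) => y_lt_x)).
  destruct (filter_ex _ (filter_and _ _ a_left (filter_and _ _ below P_left)))
    as [y [a_lt_y [y_lt_x Py]]].
  exists y; split; [lra | exact Py].
Qed.

Section AtOne.

Variables st tau theta : R.

Lemma phi_at_1 : phi st tau theta 1 = (1 - tau - st) * (tau + theta).
Proof. unfold phi; ring. Qed.

Lemma phihat_at_1 : phihat st tau theta 1 = (1 - tau - st) * (tau + theta).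
Proof. unfold phihat; ring. Qed.

Lemma phitilde_at_1 :
  phitilde st tau theta 1 = (tau + theta) * (2 - tau - theta - st).
Proof. unfold phitilde; ring. Qed.

Lemma phibar_at_1 :
  phibar st tau theta 1 =
  (tau + theta) ^ 2 * (1 - tau - st) *
  ((1 - tau ^ 2) * (2 - tau - theta - st) - (1 - theta) ^ 2 * (1 - tau - st)).
Proof. unfold phibar; rewrite phi_at_1, phihat_at_1, phitilde_at_1; ring. Qed.

Hypothesis st_nonneg : 0 <= st.
Hypothesis region : region_R st tau theta.

Lemma region_R_slack_pos : 0 < 2 - tau - theta - st.
Proof.
  destruct region as [tau_gt [tau_lt [_ disc_pos]]].
  assert (0 <= (1 - theta) ^ 2 * (1 - tau - st))
    by (apply Rmult_le_pos; [apply pow2_ge_0 | lra]).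
  assert (0 < 1 - tau ^ 2) by nra.
  apply (Rmult_lt_reg_l (1 - tau ^ 2)); lra.
Qed.

Lemma region_R_pos_at_1 :
  0 < phi st tau theta 1 /\ 0 < phihat st tau theta 1 /\
  0 < phitilde st tau theta 1 /\ 0 < phibar st tau theta 1.
Proof.
  pose proof region_R_slack_pos as slack.
  destruct region as [_ [tau_lt [sum_pos disc_pos]]].
  rewrite phi_at_1, phihat_at_1, phitilde_at_1, phibar_at_1.
  assert (c_pos : 0 < 1 - tau - st) by lra.
  repeat split; repeat apply Rmult_lt_0_compat; try assumption; nra.
Qed.

End AtOne.

Theorem proposition2p6 (st sh tau theta : R) :
  0 <= st < 1 -> 0 <= sh < 1 -> region_R st tau theta ->
  exists s : R, sh <= s < 1 /\
    phi st tau theta s >= 0 /\ phihat st tau theta s >= 0 /\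
    phitilde st tau theta s > 0 /\ phibar st tau theta s >= 0.
Proof.
  intros [st_nonneg _] [_ sh_lt_1] region.
  destruct (region_R_pos_at_1 _ _ _ st_nonneg region) as [phi1 [phihat1 [phitilde1 phibar1]]].
  assert (near_1 : forall f : R -> R,
             continuity_pt f 1 -> 0 < f 1 -> at_left 1 (fun s => 0 < f s)).
  { intros f f_cont f1_pos.
    apply filter_le_within, locally_pos_of_continuity_pt; assumption. }
  assert (all_pos : at_left 1 (fun s =>
      0 < phi st tau theta s /\ 0 < phihat st tau theta s /\
      0 < phitilde st tau theta s /\ 0 < phibar st tau theta s)).
  { repeat apply filter_and; apply near_1; try assumption;
      unfold phibar, phi, phihat, phitilde; reg. }
  destruct (at_left_exists_ge _ _ _ sh_lt_1 all_pos) as [s [s_range [? [? [? ?]]]]].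
  exists s; repeat split; lra.
Qed.
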